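(* Let $u,v:\mathbb{R}/2\pi\mathbb{Z}\times[0,1]\to\mathbb{R}^3$ and $w:\mathbb{R}/2\pi\mathbb{Z}\times[0,1]\to\mathbb{R}$ be smooth functions, $2\pi$-periodic in $t$, and let $a,\beta,\alpha:[0,1]\to\mathbb{R}$. Suppose that for all $(t,\Omega)$ \[ \begin{aligned} \partial_tv&=-\beta e_1+\Omega^2\bar Iu+2\Omega\bar Jv-w^3(u-Su)-Rw^3\,(u-S^2u),\\ \partial_tu&=v,\\ \partial_tw&=-\alpha-w^3\big\langle u-Su,\,L_a(v-Sv)\big\rangle, \end{aligned} \] and that for all $\Omega\in[0,1]$ \[ u_3(0,\Omega)=1,\qquad \frac1{2\pi}\int_0^{2\pi}u_1(t,\Omega)\,dt=0,\qquad \Big[w^2\big\langle u-Su,\,L_a(u-Su)\big\rangle\Big](0,\Omega)=1. \] Then $\alpha(\Omega)=0$ for all $\Omega\in[0,1]$.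
   Context: $e_1=(1,0,0)$, $\bar I=\mathrm{diag}(1,1,0)$, $\bar J=\begin{pmatrix}0&-1&0\\1&0&0\\0&0&0\end{pmatrix}$, $L_a=\mathrm{diag}(1,1,a)$ (with $a=a(\Omega)$). $[S^j\phi](t,\Omega)=\phi(t+4\pi j/3,\Omega)$ and $[R\phi](t,\Omega)=\phi(-t,\Omega)$; $Rw^3$ denotes the function $(t,\Omega)\mapsto w(-t,\Omega)^3$. Products of a scalar function with a vector function are componentwise, e.g. $w^3(u-Su)=(w^3(u_1-Su_1),w^3(u_2-Su_2),w^3(u_3-Su_3))$; $\langle\cdot,\cdot\rangle$ is the Euclidean inner product in $\mathbb{R}^3$. *)

From Stdlib Require Import Reals.
From Coquelicot Require Export Coquelicot.
Open Scope R_scope.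

(* Vector functions R/2piZ x [0,1] -> R^3 are represented by their three
   component functions R -> R -> R (first argument t, second argument Omega),
   2pi-periodic in t. *)

Definition Sh (j : nat) (phi : R -> R -> R) (t Om : R) : R :=
  phi (t + 4 * PI * INR j / 3) Om.

Definition Rf (phi : R -> R -> R) (t Om : R) : R := phi (- t) Om.

Definition periodic_t (phi : R -> R -> R) : Prop :=
  forall t Om, phi (t + 2 * PI) Om = phi t Om.

Definition smooth_t (phi : R -> R -> R) (Om : R) : Prop :=
  forall (n : nat) (t : R), ex_derive_n (fun s => phi s Om) n t.

(* <x, L_a y> with L_a = diag(1,1,a) *)
Definition ipL (a x1 x2 x3 y1 y2 y3 : R) : R :=
  x1 * y1 + x2 * y2 + a * (x3 * y3).

From Stdlib Require Import Reals Lra.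
From Coquelicot Require Import Coquelicot.
Open Scope R_scope.

(* With D = u - Su, the quantity K = 1/w^2 - <D, L_a D> satisfies
   K' = 2 alpha / w^3 wherever w <> 0.  If alpha <> 0, then w' = -alpha at every
   zero of w, so w can only cross 0 in one direction, which a periodic function
   cannot do; hence w never vanishes, K is periodic, and K' must vanish
   somewhere, contradicting K' = 2 alpha / w^3 <> 0. *)

Definition periodic (T : R) (f : R -> R) : Prop := forall t, f (t + T) = f t.

Lemma exists_pos_lt2 (d e : R) : 0 < d -> 0 < e -> exists h, 0 < h /\ h < d /\ h < e.
Proof.
  intros Hd He. exists (Rmin d e / 2).
  pose proof (Rmin_l d e); pose proof (Rmin_r d e); pose proof (Rmin_glb_lt d e 0 Hd He).
  lra.
Qed.

Lemma continuous_lt_near (f : R -> R) (c y : R) :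
  continuous f c -> f c < y -> exists d, 0 < d /\ forall x, Rabs (x - c) < d -> f x < y.
Proof.
  intros Hf Hlt. destruct (Hf _ (open_lt y (f c) Hlt)) as [d Hd].
  exists d; split; [apply cond_pos | intros x Hx; apply Hd, Hx].
Qed.

Lemma continuous_gt_near (f : R -> R) (c y : R) :
  continuous f c -> y < f c -> exists d, 0 < d /\ forall x, Rabs (x - c) < d -> y < f x.
Proof.
  intros Hf Hlt. destruct (Hf _ (open_gt y (f c) Hlt)) as [d Hd].
  exists d; split; [apply cond_pos | intros x Hx; apply Hd, Hx].
Qed.

Lemma is_derive_neg_crossing (f : R -> R) (c l : R) :
  is_derive f c l -> l < 0 ->
  exists eta, 0 < eta /\ forall h, 0 < h < eta -> f (c + h) < f c < f (c - h).
Proof.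
  intros Hd Hl. apply is_derive_Reals in Hd.
  destruct (Hd (- l / 2)) as [eta Heta]; [lra|].
  exists eta; split; [apply cond_pos|]. intros h Hh.
  assert (Qr := Heta h ltac:(lra) ltac:(rewrite Rabs_pos_eq; lra)).
  assert (Ql := Heta (- h) ltac:(lra) ltac:(rewrite Rabs_Ropp, Rabs_pos_eq; lra)).
  apply Rabs_def2 in Qr as [Qr _]. apply Rabs_def2 in Ql as [Ql _].
  assert (Er : f (c + h) - f c = (f (c + h) - f c) / h * h) by (field; lra).
  assert (El : f (c + - h) - f c = (f (c + - h) - f c) / - h * - h) by (field; lra).
  replace (c - h) with (c + - h) by ring.
  split; nra.
Qed.

Lemma first_zero (f : R -> R) (a b : R) :
  (forall t, continuous f t) -> f a < 0 -> 0 <= f b -> a < b ->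
  exists c, a < c <= b /\ f c = 0 /\ forall s, a <= s < c -> f s < 0.
Proof.
  intros Hf Ha Hb Hab.
  set (E := fun t => a <= t <= b /\ forall s, a <= s <= t -> f s < 0).
  destruct (completeness E) as [c [Hub Hlub]].
  { exists b. intros t Ht. apply Ht. }
  { exists a. split; [lra|]. intros s Hs. replace s with a by lra. exact Ha. }
  assert (Hac : a <= c).
  { apply Hub. split; [lra|]. intros s Hs. replace s with a by lra. exact Ha. }
  assert (Hcb : c <= b) by (apply Hlub; intros t Ht; apply Ht).
  assert (Hneg : forall s, a <= s < c -> f s < 0).
  { intros s Hs. apply Rnot_le_lt. intro Hfs.
    enough (c <= s) by lra.
    apply Hlub. intros t [Ht Hft]. apply Rnot_lt_le. intro Hst.
    specialize (Hft s ltac:(lra)). lra. }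
  assert (Hc0 : f c = 0).
  { destruct (Rtotal_order (f c) 0) as [Hlt | [Heq | Hgt]]; [exfalso | exact Heq | exfalso].
    - assert (Hcb' : c < b) by (destruct Hcb as [|<-]; lra).
      destruct (continuous_lt_near f c 0 (Hf c) Hlt) as [d [Hd Hnear]].
      destruct (exists_pos_lt2 d (b - c) Hd ltac:(lra)) as [h [Hh [Hhd Hhb]]].
      enough (c + h <= c) by lra.
      apply Hub. split; [lra|]. intros s Hs.
      destruct (Rlt_le_dec s c); [apply Hneg; lra|].
      apply Hnear. rewrite Rabs_pos_eq; lra.
    - assert (Hac' : a < c) by (destruct Hac as [|<-]; lra).
      destruct (continuous_gt_near f c 0 (Hf c) Hgt) as [d [Hd Hnear]].
      destruct (exists_pos_lt2 d (c - a) Hd ltac:(lra)) as [h [Hh [Hhd Hha]]].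
      assert (0 < f (c - h)) by (apply Hnear; rewrite Rabs_left; lra).
      assert (f (c - h) < 0) by (apply Hneg; lra).
      lra. }
  exists c. split; [|split; assumption].
  destruct Hac as [|<-]; lra.
Qed.

Lemma no_two_zeros_of_derive_neg (f df : R -> R) (a b : R) :
  (forall t, is_derive f t (df t)) -> (forall t, f t = 0 -> df t < 0) ->
  f a = 0 -> f b = 0 -> a < b -> False.
Proof.
  intros Hd Hz Ha Hb Hab.
  assert (Hf : forall t, continuous f t).
  { intro t. apply (ex_derive_continuous (V := R_NormedModule)). exists (df t). apply Hd. }
  destruct (is_derive_neg_crossing f a (df a) (Hd a) (Hz a Ha)) as [e1 [He1 Ha']].
  destruct (exists_pos_lt2 e1 (b - a) He1 ltac:(lra)) as [h [Hh [Hhe Hhb]]].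
  assert (Hah : f (a + h) < 0) by (rewrite <- Ha; apply Ha'; lra).
  destruct (first_zero f (a + h) b Hf Hah ltac:(lra) ltac:(lra)) as [c [Hc [Hc0 Hneg]]].
  destruct (is_derive_neg_crossing f c (df c) (Hd c) (Hz c Hc0)) as [e2 [He2 Hc']].
  destruct (exists_pos_lt2 e2 (c - (a + h)) He2 ltac:(lra)) as [k [Hk [Hke Hkc]]].
  assert (0 < f (c - k)) by (rewrite <- Hc0; apply Hc'; lra).
  assert (f (c - k) < 0) by (apply Hneg; lra).
  lra.
Qed.

Lemma periodic_nonvanishing (f df : R -> R) (T d0 : R) :
  0 < T -> periodic T f -> (forall t, is_derive f t (df t)) ->
  (forall t, f t = 0 -> df t = d0) -> d0 <> 0 -> forall t, f t <> 0.
Proof.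
  intros HT Hp Hd Hz Hd0 t Ht.
  assert (HtT : f (t + T) = 0) by (rewrite Hp; exact Ht).
  destruct (Rlt_or_le d0 0) as [Hneg | Hpos].
  - apply (no_two_zeros_of_derive_neg f df t (t + T)); auto; [|lra].
    intros s Hs. rewrite (Hz s Hs). exact Hneg.
  - apply (no_two_zeros_of_derive_neg (fun s => - f s) (fun s => - df s) t (t + T));
      [| | lra | lra | lra].
    + intro s. apply (is_derive_opp f s (df s)), Hd.
    + intros s Hs. rewrite (Hz s ltac:(lra)). lra.
Qed.

Lemma periodic_derive_has_zero (K dK : R -> R) (T : R) :
  0 < T -> periodic T K -> (forall t, is_derive K t (dK t)) -> exists x, dK x = 0.
Proof.
  intros HT Hp Hd.
  destruct (MVT_gen K 0 T dK) as [x [_ Hx]].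
  - intros x _. apply Hd.
  - intros x _. apply continuity_pt_filterlim, (ex_derive_continuous (V := R_NormedModule)).
    exists (dK x). apply Hd.
  - exists x. rewrite <- (Rplus_0_l T), Hp in Hx at 1.
    symmetry in Hx. rewrite Rminus_eq_0 in Hx.
    apply Rmult_integral in Hx as [Hx | Hx]; lra.
Qed.

Definition sub_shift (c : R) (U : R -> R) (s : R) : R := U s - U (s + c).

Lemma is_derive_sub_shift (U V : R -> R) (c t : R) :
  (forall s, is_derive U s (V s)) -> is_derive (sub_shift c U) t (sub_shift c V t).
Proof.
  intro HU. unfold sub_shift.
  pose proof (is_derive_unique (fun s : R => U s) _ _ (HU t)) as E0.
  pose proof (is_derive_unique (fun s : R => U s) _ _ (HU (t + c))) as Ec.
  auto_derive.
  - split; [exists (V t); apply HU|]. split; [exists (V (t + c)); apply HU | exact I].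
  - rewrite E0, Ec. ring.
Qed.

Lemma periodic_sub_shift (U : R -> R) (T c : R) :
  periodic T U -> periodic T (sub_shift c U).
Proof.
  intros Hp t. unfold sub_shift.
  rewrite Hp. replace (t + T + c) with (t + c + T) by ring. now rewrite Hp.
Qed.

Lemma is_derive_energy (W X1 X2 X3 Y1 Y2 Y3 : R -> R) (A al t : R) :
  W t <> 0 ->
  is_derive X1 t (Y1 t) -> is_derive X2 t (Y2 t) -> is_derive X3 t (Y3 t) ->
  is_derive W t (- al - W t ^ 3 * ipL A (X1 t) (X2 t) (X3 t) (Y1 t) (Y2 t) (Y3 t)) ->
  is_derive (fun s => / W s ^ 2 - ipL A (X1 s) (X2 s) (X3 s) (X1 s) (X2 s) (X3 s))
    t (2 * al / W t ^ 3).
Proof.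
  intros HW D1 D2 D3 DW. unfold ipL in *.
  pose proof (is_derive_unique (fun s : R => W s) _ _ DW) as EW.
  pose proof (is_derive_unique (fun s : R => X1 s) _ _ D1) as E1.
  pose proof (is_derive_unique (fun s : R => X2 s) _ _ D2) as E2.
  pose proof (is_derive_unique (fun s : R => X3 s) _ _ D3) as E3.
  auto_derive.
  - repeat split; try (eexists; eassumption).
    rewrite Rmult_1_r. now apply Rmult_integral_contrapositive.
  - rewrite EW, E1, E2, E3. field. exact HW.
Qed.

Lemma alpha_eq_0_of_periodic (W U1 U2 U3 V1 V2 V3 : R -> R) (A al T c : R) :
  0 < T -> periodic T W -> periodic T U1 -> periodic T U2 -> periodic T U3 ->
  (forall t, is_derive U1 t (V1 t)) -> (forall t, is_derive U2 t (V2 t)) ->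
  (forall t, is_derive U3 t (V3 t)) ->
  (forall t, is_derive W t (- al - W t ^ 3 *
     ipL A (sub_shift c U1 t) (sub_shift c U2 t) (sub_shift c U3 t)
           (sub_shift c V1 t) (sub_shift c V2 t) (sub_shift c V3 t))) ->
  al = 0.
Proof.
  intros HT PW P1 P2 P3 HU1 HU2 HU3 HW.
  destruct (Req_dec al 0) as [|Hal]; [assumption | exfalso].
  assert (Hnz : forall t, W t <> 0).
  { apply (periodic_nonvanishing W _ T (- al) HT PW HW); [|lra].
    intros t Ht. rewrite Ht. ring. }
  set (K := fun s => / W s ^ 2 - ipL A
    (sub_shift c U1 s) (sub_shift c U2 s) (sub_shift c U3 s)
    (sub_shift c U1 s) (sub_shift c U2 s) (sub_shift c U3 s)).
  assert (PK : periodic T K).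
  { intro t. unfold K.
    rewrite PW, (periodic_sub_shift U1 T c P1), (periodic_sub_shift U2 T c P2),
      (periodic_sub_shift U3 T c P3).
    reflexivity. }
  assert (DK : forall t, is_derive K t (2 * al / W t ^ 3)).
  { intro t.
    apply is_derive_energy with
      (Y1 := sub_shift c V1) (Y2 := sub_shift c V2) (Y3 := sub_shift c V3);
      [apply Hnz | apply is_derive_sub_shift; assumption .. | apply HW]. }
  destruct (periodic_derive_has_zero K _ T HT PK DK) as [x Hx].
  assert (Hx3 : W x ^ 3 <> 0) by (apply pow_nonzero, Hnz).
  apply Rmult_integral in Hx as [Hx | Hx]; [lra|].
  exact (Rinv_neq_0_compat _ Hx3 Hx).
Qed.

Theorem lemma2p4
  (u1 u2 u3 v1 v2 v3 w : R -> R -> R) (a beta alpha : R -> R)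
  (Hper : periodic_t u1 /\ periodic_t u2 /\ periodic_t u3 /\
          periodic_t v1 /\ periodic_t v2 /\ periodic_t v3 /\ periodic_t w)
  (Hsmooth : forall Om, 0 <= Om <= 1 ->
     smooth_t u1 Om /\ smooth_t u2 Om /\ smooth_t u3 Om /\
     smooth_t v1 Om /\ smooth_t v2 Om /\ smooth_t v3 Om /\ smooth_t w Om)
  (Hv1 : forall t Om, 0 <= Om <= 1 ->
     is_derive (fun s => v1 s Om) t
       (- beta Om + Om ^ 2 * u1 t Om + 2 * Om * (- v2 t Om)
        - w t Om ^ 3 * (u1 t Om - Sh 1 u1 t Om)
        - Rf w t Om ^ 3 * (u1 t Om - Sh 2 u1 t Om)))
  (Hv2 : forall t Om, 0 <= Om <= 1 ->
     is_derive (fun s => v2 s Om) t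
       (Om ^ 2 * u2 t Om + 2 * Om * v1 t Om
        - w t Om ^ 3 * (u2 t Om - Sh 1 u2 t Om)
        - Rf w t Om ^ 3 * (u2 t Om - Sh 2 u2 t Om)))
  (Hv3 : forall t Om, 0 <= Om <= 1 ->
     is_derive (fun s => v3 s Om) t
       (- w t Om ^ 3 * (u3 t Om - Sh 1 u3 t Om)
        - Rf w t Om ^ 3 * (u3 t Om - Sh 2 u3 t Om)))
  (Hu1 : forall t Om, 0 <= Om <= 1 -> is_derive (fun s => u1 s Om) t (v1 t Om))
  (Hu2 : forall t Om, 0 <= Om <= 1 -> is_derive (fun s => u2 s Om) t (v2 t Om))
  (Hu3 : forall t Om, 0 <= Om <= 1 -> is_derive (fun s => u3 s Om) t (v3 t Om))
  (Hw : forall t Om, 0 <= Om <= 1 ->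
     is_derive (fun s => w s Om) t
       (- alpha Om - w t Om ^ 3 *
          ipL (a Om)
            (u1 t Om - Sh 1 u1 t Om) (u2 t Om - Sh 1 u2 t Om) (u3 t Om - Sh 1 u3 t Om)
            (v1 t Om - Sh 1 v1 t Om) (v2 t Om - Sh 1 v2 t Om) (v3 t Om - Sh 1 v3 t Om)))
  (Hc1 : forall Om, 0 <= Om <= 1 -> u3 0 Om = 1)
  (Hc2 : forall Om, 0 <= Om <= 1 ->
     / (2 * PI) * RInt (fun t => u1 t Om) 0 (2 * PI) = 0)
  (Hc3 : forall Om, 0 <= Om <= 1 ->
     w 0 Om ^ 2 *
       ipL (a Om)
         (u1 0 Om - Sh 1 u1 0 Om) (u2 0 Om - Sh 1 u2 0 Om) (u3 0 Om - Sh 1 u3 0 Om)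
         (u1 0 Om - Sh 1 u1 0 Om) (u2 0 Om - Sh 1 u2 0 Om) (u3 0 Om - Sh 1 u3 0 Om)
     = 1) :
  forall Om, 0 <= Om <= 1 -> alpha Om = 0.
Proof.
  intros Om HOm.
  destruct Hper as [P1 [P2 [P3 [_ [_ [_ PW]]]]]].
  apply (alpha_eq_0_of_periodic (fun s => w s Om)
    (fun s => u1 s Om) (fun s => u2 s Om) (fun s => u3 s Om)
    (fun s => v1 s Om) (fun s => v2 s Om) (fun s => v3 s Om)
    (a Om) (alpha Om) (2 * PI) (4 * PI * INR 1 / 3)).
  - apply Rmult_lt_0_compat; [lra | exact PI_RGT_0].
  - intro t; apply PW.
  - intro t; apply P1.
  - intro t; apply P2.
  - intro t; apply P3.
  - intro t; apply Hu1, HOm.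
  - intro t; apply Hu2, HOm.
  - intro t; apply Hu3, HOm.
  - intro t; apply Hw, HOm.
Qed.
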